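(* Let $\boldsymbol\phi(n,m,\alpha,\beta,l)\in\mathbb C^N$ satisfy the condition equation set (for all arguments, only the indicated variable shifted) $\sigma_1\boldsymbol\phi(n-1,\cdot,l)=\boldsymbol\phi(n,\cdot,l)-\boldsymbol\phi(n-1,\cdot,l+1)$, $\sigma_2\boldsymbol\phi(m-1,\cdot,l)=\boldsymbol\phi(m,\cdot,l)-\boldsymbol\phi(m-1,\cdot,l+1)$, $\sigma_3\boldsymbol\phi(\alpha-1,\cdot,l)=\boldsymbol\phi(\alpha,\cdot,l)-\boldsymbol\phi(\alpha-1,\cdot,l+1)$, $\sigma_4\boldsymbol\phi(\beta-1,\cdot,l)=\boldsymbol\phi(\beta,\cdot,l)-\boldsymbol\phi(\beta-1,\cdot,l+1)$, and $\boldsymbol K\boldsymbol\phi(l)=\boldsymbol\phi(l+4)-\epsilon_1\boldsymbol\phi(l+3)+\epsilon_2\boldsymbol\phi(l+2)-\epsilon_3\boldsymbol\phi(l+1)$ for a constant $N\times N$ matrix $\boldsymbol K$. Let $f'=|0,\dots,N-1|$, $g'=|0,\dots,N-2,N|$ (Casoratians of $\boldsymbol\phi$). Then, writing $\sigma^-_{ij}=\sigma_i-\sigma_j$, $$\sigma^-_{13}\widetilde f'\dot{\check f}'-\sigma^-_{14}f'\widetilde{\dot{\check f}}'+\sigma^-_{34}\dot f'\widetilde{\check f}'=0,\qquad \sigma^-_{23}\widehat f'\dot{\check f}'-\sigma^-_{24}f'\widehat{\dot{\check f}}'+\sigma^-_{34}\dot f'\widehat{\check f}'=0,$$ $$f'(\sigma_3\widetilde{\check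 f}'+\widetilde{\check g}')+\sigma^-_{13}\widetilde f'\check f'-(\sigma_1f'+g')\widetilde{\check f}'=0,\qquad f'(\sigma_3\widehat{\check f}'+\widehat{\check g}')+\sigma^-_{23}\widehat f'\check f'-(\sigma_2f'+g')\widehat{\check f}'=0,$$ $$\widetilde f'(\sigma_1\dot f'+\dot g')-\sigma^-_{14}f'\widetilde{\dot f}'-(\sigma_4\widetilde f'+\widetilde g')\dot f'=0,\qquad \widehat f'(\sigma_2\dot f'+\dot g')-\sigma^-_{24}f'\widehat{\dot f}'-(\sigma_4\widehat f'+\widehat g')\dot f'=0,$$ $$\sigma^-_{14}\widetilde{\dot f}'\widehat f'-\sigma^-_{24}\widehat{\dot f}'\widetilde f'-\sigma^-_{12}\widehat{\widetilde f}'\dot f'=0,$$ $$(\sigma_3\check f'+\check g')\widehat{\widetilde{\dot f}}'-\check f'(\widehat{\widetilde{\dot g}}'-\sigma_4\widehat{\widetilde{\dot f}}')-\frac{R(\sigma_1,\sigma_4)}{\sigma^-_{12}\sigma^-_{13}}\widehat{\dot f}'\widetilde{\check f}'+\frac{R(\sigma_2,\sigma_4)}{\sigma^-_{12}\sigma^-_{23}}\widetilde{\dot f}'\widehat{\check f}'+(\sigma_1+\sigma_2+\epsilon_1)\check f'\widehat{\widetilde{\dot f}}'-\frac{R(\sigma_3,\sigma_4)}{\sigma^-_{13}\sigma^-_{23}}f'\widehat{\widetilde{\dot{\check f}}}'=0.$$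
   Context: Fix $\alpha_1,\alpha_2,\alpha_3,\delta\in\mathbb C$ and pairwise distinct $p,q,a,b\in\mathbb C$. Put $\sigma_1=p-\delta$, $\sigma_2=q-\delta$, $\sigma_3=a-\delta$, $\sigma_4=b-\delta$; $\epsilon_1=4\delta-\alpha_3$, $\epsilon_2=6\delta^2-3\delta\alpha_3+\alpha_2$, $\epsilon_3=4\delta^3-3\delta^2\alpha_3+2\delta\alpha_2-\alpha_1$; $R(x,y)=(x+y)(x^2+y^2)+\epsilon_1((x+y)^2-xy)+\epsilon_2(x+y)+\epsilon_3$. Casoratian notation: $|l_1,\dots,l_N|=\det(\boldsymbol\phi(l_1),\dots,\boldsymbol\phi(l_N))$ with $\boldsymbol\phi(l)=\boldsymbol\phi(n,m,\alpha,\beta,l)$; a run ''$0,\dots,j$'' with $j<0$ is empty. Shifts: $\widetilde F=F(n+1,m,\alpha,\beta)$, $\widehat F=F(n,m+1,\alpha,\beta)$, $\check F=F(n,m,\alpha-1,\beta)$, $\dot F=F(n,m,\alpha,\beta+1)$, composed as needed. *)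

From mathcomp Require Import all_boot all_algebra.
From mathcomp Require Import complex reals Rstruct.
Set Implicit Arguments. Unset Strict Implicit. Unset Printing Implicit Defensive.
Import GRing.Theory Num.Theory.
Local Open Scope ring_scope.

Definition CC : numClosedFieldType := Rdefinitions.R[i].

(* phi(n,m,alpha,beta,l) in C^N, as a column vector; all arguments are integers. *)
Definition phiT (N : nat) := int -> int -> int -> int -> int -> 'cV[CC]_N.

(* Casoratian |l_0, ..., l_{N-1}| = det(phi(l_0), ..., phi(l_{N-1})),
   the j-th column being phi(l_j), at fixed (n,m,alpha,beta). *)
Definition casoratian (N : nat) (v : int -> 'cV[CC]_N) (ls : 'I_N -> int) : CC :=
  \det (\matrix_(i < N, j < N) v (ls j) i 0).

Definition fcas (N : nat) (phi : phiT N) (n m al be : int) : CC :=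
  casoratian (phi n m al be) (fun j => (nat_of_ord j)%:Z).

Definition gcas (N : nat) (phi : phiT N) (n m al be : int) : CC :=
  casoratian (phi n m al be)
    (fun j => if nat_of_ord j == N.-1 then N%:Z else (nat_of_ord j)%:Z).

Definition eps1 (a3 d : CC) : CC := 4 * d - a3.
Definition eps2 (a2 a3 d : CC) : CC := 6 * d ^+ 2 - 3 * d * a3 + a2.
Definition eps3 (a1 a2 a3 d : CC) : CC :=
  4 * d ^+ 3 - 3 * d ^+ 2 * a3 + 2 * d * a2 - a1.

Definition Rpol (e1 e2 e3 x y : CC) : CC :=
  (x + y) * (x ^+ 2 + y ^+ 2) + e1 * ((x + y) ^+ 2 - x * y) + e2 * (x + y) + e3.

From HB Require Import structures.
From mathcomp Require Import all_boot all_algebra.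
From mathcomp Require Import complex reals Rstruct.
From mathcomp Require Import ring.
From Stdlib Require Import FunctionalExtensionality.
Set Implicit Arguments. Unset Strict Implicit. Unset Printing Implicit Defensive.
Import GRing.Theory Num.Theory.
Local Open Scope ring_scope.

(* Each condition equation says that a lattice shift acts on l |-> phi(l) as the operator
   step x : chi |-> x chi + chi(. + 1), and these operators commute.  The Casoratian f of
   step x psi is the generating polynomial sum_m x^m M_m of the maximal minors M_m of the
   N + 1 vectors psi(0), ..., psi(N), and these minors satisfy the Cramer syzygy
   sum_m (-1)^m M_m psi(m) = 0.  Pairing the expansion with the linear form
   v |-> det [v; Phi(0); ...; Phi(N-2)] of Phi = step x a shows that
   f(step x psi) f(a) - f(psi) f(Phi) is that form evaluated at sum_m (-1)^m M_m a(m).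
   In the combination making up each bilinear identity these evaluations add up to a
   multiple of the syzygy, or, using the K-relation, to the form evaluated at
   sum_m (-1)^m M_m Phi(m), which is g(psi) f(Phi) - f(psi) g(Phi).  The identities
   involving g of a shifted sequence use the form that skips Phi(N-2) instead. *)

Section RowDeterminants.
Variable R : comRingType.

Definition rows_mx n (c : nat -> 'I_n -> R) : 'M[R]_n := \matrix_(i, j) c i j.

Lemma det_rows_add_prev n (c c' : nat -> 'I_n -> R) (lam : nat -> R) :
  (forall (i : nat) j, (i < n)%N ->
     c' i j = c i j + (if i is k.+1 then lam k * c k j else 0)) ->
  \det (rows_mx c') = \det (rows_mx c).
Proof.
move=> c'E.
pose T : 'M[R]_n := \matrix_(i, j) ((i == j)%:R + (if (i : nat) == j.+1 then lam j else 0)).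
have -> : rows_mx c' = T *m rows_mx c.
  apply/matrixP => i j; rewrite !mxE c'E //.
  under eq_bigr do rewrite !mxE mulrDl.
  rewrite big_split /=; congr (_ + _).
    rewrite (bigD1 i) //= eqxx mul1r big1 ?addr0 // => k /negbTE.
    by rewrite eq_sym => ->; rewrite mul0r.
  case: i => [[|k] Hk] /=; first by rewrite big1 // => k _; rewrite mul0r.
  rewrite (bigD1 (Ordinal (ltnW Hk))) //= eqxx big1 ?addr0 // => l /eqP Hkl.
  case: eqP => [[e]|]; last by rewrite mul0r.
  by case: Hkl; apply: val_inj; rewrite /= e.
have T_trig : is_trig_mx T.
  apply/is_trig_mxP => i j lt_ij; rewrite !mxE.
  have /negbTE -> : i != j by rewrite neq_ltn lt_ij.
  by rewrite ltn_eqF ?addr0 // ltnS ltnW.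
rewrite det_mulmx det_trig // big1 ?mul1r // => i _.
by rewrite !mxE eqxx ltn_eqF ?addr0.
Qed.

Definition insert_row n (c : nat -> 'I_n -> R) (v : 'I_n -> R) (k : nat) : nat -> 'I_n -> R :=
  fun i j => if (i < k)%N then c i j else if i == k then v j else c i.-1 j.

Lemma det_insert_row n (c : nat -> 'I_n.+1 -> R) (v : 'I_n.+1 -> R) (k : 'I_n.+1) :
  \det (rows_mx (insert_row c v 0)) = (-1) ^+ k * \det (rows_mx (insert_row c v k)).
Proof.
rewrite (expand_det_row _ ord0) (expand_det_row _ k) big_distrr; apply: eq_bigr => j _.
rewrite !mxE /insert_row /= ltnn eqxx /cofactor.
have -> : row' ord0 (col' j (rows_mx (insert_row c v 0)))
        = row' k (col' j (rows_mx (insert_row c v k))).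
  apply/matrixP => a b; rewrite !mxE /insert_row /= /bump add0n.
  case: (leqP k a) => [ka|ak] /=; last by rewrite ak.
  by rewrite ltnNge (leqW ka) /= gtn_eqF.
rewrite add0n exprD !mulrA [_ * v j]mulrC -!mulrA; congr (_ * _).
by rewrite !mulrA -expr2 sqrr_sign mul1r.
Qed.

Definition det_row_form n (c : nat -> 'I_n -> R) (p : 'I_n) : 'rV[R]_n :=
  \row_j cofactor (rows_mx c) p j.

Lemma det_row_formE n (c : nat -> 'I_n -> R) (p : 'I_n) (v : 'cV[R]_n) :
  \det (rows_mx (fun i j => if i == p then v j 0 else c i j)) = (det_row_form c p *m v) 0 0.
Proof.
rewrite (expand_det_row _ p) mxE; apply: eq_bigr => j _; rewrite !mxE eqxx mulrC.
congr (_ * _); rewrite /cofactor; congr (_ * \det _).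
apply/matrixP => a b; rewrite !mxE.
by have /negbTE -> : (lift p a : nat) != p by rewrite eq_sym (neq_lift p a).
Qed.

End RowDeterminants.

Definition vdot (R : comRingType) n (l : 'rV[R]_n) (v : 'cV[R]_n) : R := (l *m v) 0 0.

Section Vdot.
Variables (R : comRingType) (n : nat) (l : 'rV[R]_n).
Implicit Types u v : 'cV[R]_n.

Lemma vdotD u v : vdot l (u + v) = vdot l u + vdot l v.
Proof. by rewrite /vdot mulmxDr mxE. Qed.

Lemma vdotZ a u : vdot l (a *: u) = a * vdot l u.
Proof. by rewrite /vdot -scalemxAr mxE. Qed.

Lemma vdotB u v : vdot l (u - v) = vdot l u - vdot l v.
Proof. by rewrite vdotD -scaleN1r vdotZ mulN1r. Qed.

Lemma vdot0 : vdot l 0 = 0.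
Proof. by rewrite /vdot mulmx0 mxE. Qed.

Lemma vdot_sum k (F : 'I_k -> 'cV[R]_n) :
  vdot l (\sum_(i < k) F i) = \sum_(i < k) vdot l (F i).
Proof. by rewrite /vdot mulmx_sumr summxE. Qed.

Lemma vdot_mulmx (A : 'M[R]_n) v : vdot l (A *m v) = vdot (l *m A) v.
Proof. by rewrite /vdot mulmxA. Qed.

End Vdot.

Lemma natz_add1 (k : nat) : k%:Z + 1 = k.+1%:Z.
Proof. by rewrite intS addrC. Qed.

HB.lock Definition step N (x : CC) (chi : int -> 'cV[CC]_N) : int -> 'cV[CC]_N :=
  fun l => x *: chi l + chi (l + 1).

Lemma stepE N x (chi : int -> 'cV[CC]_N) l : step x chi l = x *: chi l + chi (l + 1).
Proof. by rewrite unlock. Qed.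

Lemma step_comm N x y (chi : int -> 'cV[CC]_N) : step x (step y chi) = step y (step x chi).
Proof.
apply: functional_extensionality => l; apply/matrixP => i j.
by rewrite !stepE !mxE; ring.
Qed.

Lemma vdot_step N (l : 'rV[CC]_N) x chi k :
  vdot l (step x chi k) = x * vdot l (chi k) + vdot l (chi (k + 1)).
Proof. by rewrite stepE vdotD vdotZ. Qed.

Definition casf N (chi : int -> 'cV[CC]_N) : CC :=
  casoratian chi (fun j => (j : nat)%:Z).

Definition casg N (chi : int -> 'cV[CC]_N) : CC :=
  casoratian chi (fun j => if (j : nat) == N.-1 then N%:Z else (j : nat)%:Z).

Lemma casfE N (chi : int -> 'cV[CC]_N) : casf chi = \det (rows_mx (fun i j => chi i%:Z j 0)).
Proof. by rewrite -det_tr; congr (\det _); apply/matrixP => i j; rewrite !mxE. Qed.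

Lemma casgE N (chi : int -> 'cV[CC]_N) :
  casg chi = \det (rows_mx (fun i j => chi (if i == N.-1 then N%:Z else i%:Z) j 0)).
Proof. by rewrite -det_tr; congr (\det _); apply/matrixP => i j; rewrite !mxE. Qed.

Definition cas_minor n (chi : int -> 'cV[CC]_n.+1) (m : nat) : CC :=
  \det (rows_mx (fun k j => chi (bump m k)%:Z j 0)).

Lemma cas_minor_last n (chi : int -> 'cV[CC]_n.+1) : cas_minor chi n.+1 = casf chi.
Proof.
by rewrite casfE; congr (\det _); apply/matrixP => i j; rewrite !mxE /bump leqNgt ltn_ord.
Qed.

Lemma cas_minor_penult n (chi : int -> 'cV[CC]_n.+1) : cas_minor chi n = casg chi.
Proof.
rewrite casgE; congr (\det _); apply/matrixP => i j; rewrite !mxE /bump /=.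
case: leqP => [le_ni|lt_in]; last by rewrite ltn_eqF.
have -> : (i : nat) = n by apply/eqP; rewrite eqn_leq le_ni -ltnS ltn_ord.
by rewrite eqxx.
Qed.

Lemma det_bordered_minors n (chi : int -> 'cV[CC]_n.+1) (rho : nat -> CC) :
  \det (rows_mx (fun i (j : 'I_n.+2) =>
          if (j : nat) is r.+1 then chi i%:Z (inord r) 0 else rho i))
  = \sum_(m < n.+2) rho m * (-1) ^+ m * cas_minor chi m.
Proof.
rewrite (expand_det_col _ ord0); apply: eq_bigr => i _.
rewrite /cofactor !mxE /= addn0 mulrA; congr (_ * \det _).
by apply/matrixP => a b; rewrite !mxE /= inord_val.
Qed.

Definition minor_comb n (psi chi : int -> 'cV[CC]_n.+1) : 'cV[CC]_n.+1 :=
  \sum_(m < n.+2) ((-1) ^+ m * cas_minor psi m) *: chi m%:Z.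

(* The bordered matrix whose border is the column [chi i r] has two equal columns. *)
Lemma minor_comb_self n (chi : int -> 'cV[CC]_n.+1) : minor_comb chi chi = 0.
Proof.
apply/matrixP => r c0; rewrite summxE [RHS]mxE.
transitivity (\sum_(m < n.+2) chi m%:Z r 0 * (-1) ^+ m * cas_minor chi m).
  by apply: eq_bigr => m _; rewrite !mxE (ord1 c0) mulrC mulrA.
rewrite -(det_bordered_minors chi (fun i => chi i%:Z r 0)) -det_tr.
apply: (@determinant_alternate _ _ _ ord0 (lift ord0 r)); first exact: neq_lift.
by move=> k; rewrite !mxE /= inord_val.
Qed.

Lemma vdot_minor_comb n (l : 'rV[CC]_n.+1) (psi chi : int -> 'cV[CC]_n.+1) :
  vdot l (minor_comb psi chi)
  = \sum_(m < n.+2) ((-1) ^+ m * cas_minor psi m) * vdot l (chi m%:Z).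
Proof. by rewrite vdot_sum; apply: eq_bigr => m _; rewrite vdotZ. Qed.

Lemma vdot_minor_comb_self n (l : 'rV[CC]_n.+1) (psi : int -> 'cV[CC]_n.+1) :
  \sum_(m < n.+2) ((-1) ^+ m * cas_minor psi m) * vdot l (psi m%:Z) = 0.
Proof. by rewrite -vdot_minor_comb minor_comb_self vdot0. Qed.

(* Border the rows [chi 0; ...; chi (n+1)] with the column ((-x)^i): adding x times each row
   to the next one turns the border into e_0 and the other rows into those of [step x chi]. *)
Lemma casf_step n x (chi : int -> 'cV[CC]_n.+1) :
  casf (step x chi) = \sum_(m < n.+2) x ^+ m * cas_minor chi m.
Proof.
pose c i (j : 'I_n.+2) := if (j : nat) is r.+1 then chi i%:Z (inord r) 0 else (-x) ^+ i.
pose c' i j := if i is k.+1 then (if (j : nat) is r.+1 then step x chi k%:Z (inord r) 0 else 0)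
               else c 0%N j.
transitivity (\det (rows_mx c)); last first.
  rewrite det_bordered_minors; apply: eq_bigr => m _.
  by rewrite -exprMn mulrN1 opprK.
rewrite -(@det_rows_add_prev _ _ c c' (fun _ => x)); last first.
  move=> [|k] j _ /=; first by rewrite addr0.
  rewrite /c; case: (nat_of_ord j) => [|r]; first by rewrite exprS; ring.
  by rewrite stepE !mxE natz_add1 addrC.
rewrite (expand_det_col _ ord0) (bigD1 ord0) //= big1 ?addr0; last first.
  by move=> [[|i] Hi] // _; rewrite !mxE /= mul0r.
rewrite !mxE /c /= mul1r /cofactor /= expr0 mul1r casfE; congr (\det _).
by apply/matrixP => a b; rewrite !mxE /c' /= !add0n inord_val stepE !mxE.
Qed.

Definition resid N x (a : int -> 'cV[CC]_N) (m : nat) : 'cV[CC]_N :=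
  x ^+ m *: a 0 - (-1) ^+ m *: a m%:Z.

Lemma resid_succ N x (a : int -> 'cV[CC]_N) m :
  resid x a m.+1 = x *: resid x a m + (-1) ^+ m *: step x a m%:Z.
Proof.
rewrite /resid stepE natz_add1.
by apply/matrixP => i j; rewrite !mxE !exprS; ring.
Qed.

Lemma vdot_resid_eq0 N (l : 'rV[CC]_N) x (a : int -> 'cV[CC]_N) k :
  (forall t, (t < k)%N -> vdot l (step x a t%:Z) = 0) ->
  forall m, (m <= k)%N -> vdot l (resid x a m) = 0.
Proof.
move=> step_eq0; elim=> [|m IHm] le_mk; first by rewrite /resid !expr0 !scale1r subrr vdot0.
by rewrite resid_succ vdotD !vdotZ IHm ?step_eq0 ?mulr0 ?addr0 // ltnW.
Qed.

Lemma casf_step_vdot n x (psi a : int -> 'cV[CC]_n.+1) (l : 'rV[CC]_n.+1) :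
  casf (step x psi) * vdot l (a 0) =
  vdot l (minor_comb psi a) + \sum_(m < n.+2) cas_minor psi m * vdot l (resid x a m).
Proof.
rewrite casf_step vdot_minor_comb big_distrl -big_split; apply: eq_bigr => m _ /=.
by rewrite /resid vdotB !vdotZ; ring.
Qed.

Definition casf_form n (Phi : int -> 'cV[CC]_n.+1) : 'rV[CC]_n.+1 :=
  det_row_form (fun i j => Phi i.-1%:Z j 0) ord0.

Lemma casf_formE n (Phi : int -> 'cV[CC]_n.+1) v :
  vdot (casf_form Phi) v
  = \det (rows_mx (fun i j => if i == 0%N then v j 0 else Phi i.-1%:Z j 0)).
Proof. by rewrite /vdot -det_row_formE. Qed.

Lemma casf_form_eq0 n (Phi : int -> 'cV[CC]_n.+1) t :
  (t < n)%N -> vdot (casf_form Phi) (Phi t%:Z) = 0.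
Proof.
move=> lt_tn; rewrite casf_formE.
by apply: (@determinant_alternate _ _ _ ord0 (@Ordinal n.+1 t.+1 lt_tn)) => // j; rewrite !mxE.
Qed.

Lemma casf_form_rotate n (Phi : int -> 'cV[CC]_n.+1) v :
  vdot (casf_form Phi) v
  = (-1) ^+ n * \det (rows_mx (fun i j => if i == n then v j 0 else Phi i%:Z j 0)).
Proof.
pose c i (j : 'I_n.+1) := Phi i%:Z j 0.
have -> : vdot (casf_form Phi) v = \det (rows_mx (insert_row c (fun j => v j 0) 0)).
  rewrite casf_formE; apply: congr1; apply/matrixP => i j.
  by rewrite !mxE /insert_row; case: (i : nat).
rewrite (det_insert_row _ _ ord_max); congr (_ * \det _).
apply/matrixP => i j; rewrite !mxE /insert_row /=.
case: ltnP => [lt_in|le_ni]; first by rewrite ltn_eqF.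
have -> : (i : nat) = n by apply/eqP; rewrite eqn_leq le_ni -ltnS ltn_ord.
by rewrite eqxx.
Qed.

Lemma casf_form_last n (Phi : int -> 'cV[CC]_n.+1) :
  vdot (casf_form Phi) (Phi n%:Z) = (-1) ^+ n * casf Phi.
Proof.
rewrite casf_form_rotate casfE; congr (_ * \det _); apply/matrixP => i j; rewrite !mxE.
by case: eqP => [->|].
Qed.

Lemma casf_form_next n (Phi : int -> 'cV[CC]_n.+1) :
  vdot (casf_form Phi) (Phi n.+1%:Z) = (-1) ^+ n * casg Phi.
Proof.
rewrite casf_form_rotate casgE; congr (_ * \det _); apply/matrixP => i j; rewrite !mxE.
by case: eqP.
Qed.

Lemma casf_by_form n x (a : int -> 'cV[CC]_n.+1) : casf a = vdot (casf_form (step x a)) (a 0).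
Proof.
rewrite casfE casf_formE; symmetry; apply: (@det_rows_add_prev _ _ _ _ (fun _ => x)).
move=> [|k] j _ /=; first by rewrite addr0.
by rewrite stepE !mxE natz_add1; ring.
Qed.

Definition casg_form n (Phi : int -> 'cV[CC]_n.+2) : 'rV[CC]_n.+2 :=
  det_row_form (fun i j => Phi (if i == n.+1 then n.+1 else i.-1)%:Z j 0) ord0.

Lemma casg_formE n (Phi : int -> 'cV[CC]_n.+2) v :
  vdot (casg_form Phi) v = \det (rows_mx (fun i j =>
    if i == 0%N then v j 0 else Phi (if i == n.+1 then n.+1 else i.-1)%:Z j 0)).
Proof. by rewrite /vdot -det_row_formE. Qed.

Lemma casg_form_eq0 n (Phi : int -> 'cV[CC]_n.+2) t :
  (t < n)%N || (t == n.+1) -> vdot (casg_form Phi) (Phi t%:Z) = 0.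
Proof.
rewrite casg_formE; case/orP => [lt_tn|/eqP ->].
  have lt_t1 : (t.+1 < n.+2)%N by rewrite ltnS ltnW.
  apply: (@determinant_alternate _ _ _ ord0 (Ordinal lt_t1)) => // j.
  by rewrite !mxE /= ltn_eqF.
by apply: (@determinant_alternate _ _ _ ord0 ord_max) => // j; rewrite !mxE /= eqxx.
Qed.

Lemma casg_form_penult n (Phi : int -> 'cV[CC]_n.+2) :
  vdot (casg_form Phi) (Phi n%:Z) = (-1) ^+ n * casf Phi.
Proof.
pose c i (j : 'I_n.+2) := Phi (if i == n then n.+1 else i)%:Z j 0.
have -> : vdot (casg_form Phi) (Phi n%:Z)
          = \det (rows_mx (insert_row c (fun j => Phi n%:Z j 0) 0)).
  rewrite casg_formE; congr (\det _); apply/matrixP => i j; rewrite !mxE /insert_row.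
  by case: (i : nat) => //= k; rewrite eqSS.
have lt_n2 : (n < n.+2)%N by rewrite leqW.
rewrite (det_insert_row _ _ (Ordinal lt_n2)) casfE; congr (_ * \det _).
apply/matrixP => i j; rewrite !mxE /insert_row /c /=.
case: ltnP => [lt_in|le_ni]; first by rewrite ltn_eqF.
case: eqP => [->|ne_in] //.
have -> : (i : nat) = n.+1.
  by apply/eqP; rewrite eqn_leq -ltnS ltn_ord ltn_neqAle eq_sym le_ni andbT; apply/eqP.
by rewrite eqxx.
Qed.

Lemma casfg_by_form n x (a : int -> 'cV[CC]_n.+2) :
  x * casf a + casg a = vdot (casg_form (step x a)) (a 0).
Proof.
rewrite casg_formE casfE casgE.
transitivity (\det (rows_mx (fun i j =>
                if i == n.+1 then step x a n.+1%:Z j 0 else a i%:Z j 0))).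
  symmetry; rewrite -[X in _ = _ + X]mul1r.
  apply: (@determinant_multilinear _ _ _ _ _ ord_max).
  - by apply/matrixP => i j; rewrite !mxE /= eqxx stepE !mxE natz_add1; ring.
  - by apply/matrixP => i j; rewrite !mxE lift_max ltn_eqF.
  - by apply/matrixP => i j; rewrite !mxE lift_max /= !ltn_eqF.
symmetry; apply: (@det_rows_add_prev _ _ _ _ (fun k => if k == n then 0 else x)).
move=> [|k] j lt_k /=; first by rewrite addr0.
rewrite eqSS; case: eqP => [_|ne_kn]; first by rewrite mul0r addr0.
by rewrite ltn_eqF // stepE !mxE natz_add1; ring.
Qed.

Lemma casf_form_minor_comb_step n x (psi a : int -> 'cV[CC]_n.+1) :
  vdot (casf_form (step x a)) (minor_comb psi a)
  = casf (step x psi) * casf a - casf psi * casf (step x a).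
Proof.
have vanish t : (t < n)%N -> vdot (casf_form (step x a)) (step x a t%:Z) = 0.
  exact: casf_form_eq0.
apply/eqP; rewrite eq_sym subr_eq {1}(casf_by_form x a) casf_step_vdot big_ord_recr /=.
rewrite big1 ?add0r => [|m _]; last by rewrite (vdot_resid_eq0 vanish) ?mulr0 // -ltnS.
rewrite resid_succ vdotD !vdotZ (vdot_resid_eq0 vanish) // mulr0 add0r.
by rewrite casf_form_last cas_minor_last signrMK.
Qed.

Lemma casg_form_minor_comb_step n x (psi a : int -> 'cV[CC]_n.+2) :
  vdot (casg_form (step x a)) (minor_comb psi a)
  = casf (step x psi) * (x * casf a + casg a) - (x * casf psi + casg psi) * casf (step x a).
Proof.
have vanish t : (t < n)%N -> vdot (casg_form (step x a)) (step x a t%:Z) = 0.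
  by move=> lt_tn; rewrite casg_form_eq0 ?lt_tn.
have resid_n1 : vdot (casg_form (step x a)) (resid x a n.+1) = casf (step x a).
  rewrite resid_succ vdotD !vdotZ (vdot_resid_eq0 vanish) // mulr0 add0r.
  by rewrite casg_form_penult signrMK.
apply/eqP; rewrite eq_sym subr_eq casfg_by_form casf_step_vdot big_ord_recr big_ord_recr /=.
rewrite big1 ?add0r => [|m _]; last by rewrite (vdot_resid_eq0 vanish) ?mulr0 // -ltnS.
rewrite resid_n1 resid_succ vdotD !vdotZ resid_n1 casg_form_eq0 ?eqxx ?orbT // mulr0 addr0.
by rewrite cas_minor_last cas_minor_penult; apply/eqP; ring.
Qed.

Lemma casf_form_minor_comb n (psi Phi : int -> 'cV[CC]_n.+1) :
  vdot (casf_form Phi) (minor_comb psi Phi) = casg psi * casf Phi - casf psi * casg Phi.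
Proof.
rewrite vdot_minor_comb big_ord_recr big_ord_recr /= big1 ?add0r => [|m _]; last first.
  by rewrite casf_form_eq0 ?mulr0.
rewrite casf_form_last casf_form_next cas_minor_penult cas_minor_last exprS.
by rewrite mulN1r !mulNr -!mulrA !(mulrCA ((-1) ^+ n)) !signrMK.
Qed.

Lemma casf_hirota_miwa n (psi : int -> 'cV[CC]_n.+1) (a b c : CC) :
  (a - b) * casf (step a (step b psi)) * casf (step c psi)
  - (a - c) * casf (step b psi) * casf (step a (step c psi))
  + (b - c) * casf (step b (step c psi)) * casf (step a psi) = 0.
Proof.
have Pa := casf_form_minor_comb_step a psi (step b (step c psi)).
have Pb := casf_form_minor_comb_step b psi (step a (step c psi)).
have Pc := casf_form_minor_comb_step c psi (step a (step b psi)).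
rewrite (step_comm b a) in Pb; rewrite (step_comm c a) (step_comm c b) in Pc.
set L := casf_form _ in Pa Pb Pc.
have comb : (b - c) * vdot L (minor_comb psi (step b (step c psi)))
          - (a - c) * vdot L (minor_comb psi (step a (step c psi)))
          + (a - b) * vdot L (minor_comb psi (step a (step b psi))) = 0.
  transitivity (((b - c) * b * c - (a - c) * a * c + (a - b) * a * b)
                * \sum_(m < n.+2) ((-1) ^+ m * cas_minor psi m) * vdot L (psi m%:Z)).
    rewrite !vdot_minor_comb !mulr_sumr -sumrB -big_split /=.
    by apply: eq_bigr => m _; rewrite !vdot_step; ring.
  by rewrite vdot_minor_comb_self mulr0.
by rewrite Pa Pb Pc in comb; rewrite -[RHS]comb; ring.
Qed.

Lemma casf1 (chi : int -> 'cV[CC]_1) : casf chi = chi 0 0 0.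
Proof. by rewrite casfE det_mx11 mxE. Qed.

Lemma casg1 (chi : int -> 'cV[CC]_1) : casg chi = chi 1 0 0.
Proof. by rewrite casgE det_mx11 mxE. Qed.

Lemma casfg_step_identity n (psi : int -> 'cV[CC]_n.+1) (y z : CC) :
  casf (step z psi) * (z * casf (step y psi) + casg (step y psi))
  + (y - z) * casf (step y (step z psi)) * casf psi
  - (y * casf (step z psi) + casg (step z psi)) * casf (step y psi) = 0.
Proof.
case: n psi => [|n] psi.
  by rewrite !casf1 !casg1 !stepE !mxE !natz_add1; ring.
have Pz := casg_form_minor_comb_step z psi (step y psi).
have Py := casg_form_minor_comb_step y psi (step z psi).
rewrite (step_comm z y) in Pz.
set L := casg_form _ in Pz Py.
have comb : vdot L (minor_comb psi (step y psi)) - vdot L (minor_comb psi (step z psi)) = 0.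
  transitivity ((y - z) * \sum_(m < n.+3) ((-1) ^+ m * cas_minor psi m) * vdot L (psi m%:Z)).
    rewrite !vdot_minor_comb mulr_sumr -sumrB.
    by apply: eq_bigr => m _; rewrite !vdot_step; ring.
  by rewrite vdot_minor_comb_self mulr0.
by rewrite Pz Py in comb; rewrite -[RHS]comb; ring.
Qed.

(* [Rpol e1 e2 e3 x y] is monic cubic in x with x^2-coefficient y + e1. *)
Lemma Rpol_second_divided_difference (e1 e2 e3 x1 x2 x3 x4 : CC) :
  x1 != x2 -> x1 != x3 -> x2 != x3 ->
  Rpol e1 e2 e3 x1 x4 / ((x1 - x2) * (x1 - x3))
  - Rpol e1 e2 e3 x2 x4 / ((x1 - x2) * (x2 - x3))
  + Rpol e1 e2 e3 x3 x4 / ((x1 - x3) * (x2 - x3)) = x1 + x2 + x3 + x4 + e1.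
Proof.
move=> ne12 ne13 ne23; rewrite /Rpol.
by field; rewrite !subr_eq0 ne12 ne13 ne23.
Qed.

Lemma casfg_dispersion_identity n (psi : int -> 'cV[CC]_n.+1) (K : 'M[CC]_n.+1)
    (x1 x2 x3 x4 e1 e2 e3 : CC) :
  x1 != x2 -> x1 != x3 -> x2 != x3 ->
  (forall l, K *m psi l
             = psi (l + 4) - e1 *: psi (l + 3) + e2 *: psi (l + 2) - e3 *: psi (l + 1)) ->
  (x3 * casf psi + casg psi) * casf (step x1 (step x2 (step x3 (step x4 psi))))
  - casf psi * (casg (step x1 (step x2 (step x3 (step x4 psi))))
                - x4 * casf (step x1 (step x2 (step x3 (step x4 psi)))))
  - Rpol e1 e2 e3 x1 x4 / ((x1 - x2) * (x1 - x3))
      * casf (step x2 (step x3 (step x4 psi))) * casf (step x1 psi)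
  + Rpol e1 e2 e3 x2 x4 / ((x1 - x2) * (x2 - x3))
      * casf (step x1 (step x3 (step x4 psi))) * casf (step x2 psi)
  + (x1 + x2 + e1) * casf psi * casf (step x1 (step x2 (step x3 (step x4 psi))))
  - Rpol e1 e2 e3 x3 x4 / ((x1 - x3) * (x2 - x3))
      * casf (step x3 psi) * casf (step x1 (step x2 (step x4 psi))) = 0.
Proof.
move=> ne12 ne13 ne23 dispK.
have P1 := casf_form_minor_comb_step x1 psi (step x2 (step x3 (step x4 psi))).
have P2 := casf_form_minor_comb_step x2 psi (step x1 (step x3 (step x4 psi))).
have P3 := casf_form_minor_comb_step x3 psi (step x1 (step x2 (step x4 psi))).
rewrite (step_comm x2 x1) in P2; rewrite (step_comm x3 x1) (step_comm x3 x2) in P3.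
set Phi := step x1 (step x2 (step x3 (step x4 psi))) in P1 P2 P3 *.
have P := casf_form_minor_comb psi Phi.
set L := casf_form Phi in P1 P2 P3 P.
have csum := Rpol_second_divided_difference e1 e2 e3 x4 ne12 ne13 ne23.
set c1 := Rpol e1 e2 e3 x1 x4 / _ in csum *.
set c2 := Rpol e1 e2 e3 x2 x4 / _ in csum *.
set c3 := Rpol e1 e2 e3 x3 x4 / _ in csum *.
have add2 (l : int) : l + 2 = l + 1 + 1 by rewrite -addrA.
have add3 (l : int) : l + 3 = l + 1 + 1 + 1 by rewrite -!addrA.
have add4 (l : int) : l + 4 = l + 1 + 1 + 1 + 1 by rewrite -!addrA.
have comb : c1 * vdot L (minor_comb psi (step x2 (step x3 (step x4 psi))))
          - c2 * vdot L (minor_comb psi (step x1 (step x3 (step x4 psi))))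
          + c3 * vdot L (minor_comb psi (step x1 (step x2 (step x4 psi))))
          = vdot L (minor_comb psi Phi).
  (* Write S for the shift l |-> l + 1.  Then K = rho(-S) and R x y = (rho x - rho y)/(x - y),
     so the identity is (x4 + S) times Lagrange interpolation at -x1, -x2, -x3 of the
     quadratic S |-> (x1 + S)(x2 + S)(x3 + S) + R (-S) x4. *)
  pose rho x := x ^+ 4 + e1 * x ^+ 3 + e2 * x ^+ 2 + e3 * x.
  transitivity (vdot L (minor_comb psi Phi)
    - \sum_(m < n.+2) ((-1) ^+ m * cas_minor psi m) * vdot (L *m K) (psi m%:Z)
    + rho x4 * \sum_(m < n.+2) ((-1) ^+ m * cas_minor psi m) * vdot L (psi m%:Z)); last first.
    by rewrite !vdot_minor_comb_self mulr0 subr0 addr0.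
  rewrite !vdot_minor_comb !mulr_sumr -!sumrB -!big_split /=; apply: eq_bigr => m _.
  rewrite -vdot_mulmx dispK add4 add3 add2 /Phi !vdot_step vdotB vdotD vdotB !vdotZ.
  move: ((-1) ^+ m * cas_minor psi m) (vdot L (psi m%:Z)) (vdot L (psi (m%:Z + 1)))
    (vdot L (psi (m%:Z + 1 + 1))) (vdot L (psi (m%:Z + 1 + 1 + 1)))
    (vdot L (psi (m%:Z + 1 + 1 + 1 + 1))) => w v0 v1 v2 v3 v4.
  rewrite /c1 /c2 /c3 /rho /Rpol.
  by field; rewrite !subr_eq0 ne12 ne13 ne23.
rewrite P1 P2 P3 P in comb.
have c3E : c3 = x1 + x2 + x3 + x4 + e1 - c1 + c2 by rewrite -csum; ring.
rewrite c3E in comb *.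
rewrite -[RHS](subrr (casg psi * casf Phi - casf psi * casg Phi)) -[X in _ = _ - X]comb.
ring.
Qed.

Lemma condition_step N s (chi : int -> int -> 'cV[CC]_N) :
  (forall k l, s *: chi (k - 1) l = chi k l - chi (k - 1) (l + 1)) ->
  forall k, chi (k + 1) = step s (chi k).
Proof.
move=> cond k; apply: functional_extensionality => l.
by rewrite stepE; have := cond (k + 1) l; rewrite addrK => ->; rewrite subrK.
Qed.

Lemma fcasE N (phi : phiT N) n m al be : fcas phi n m al be = casf (phi n m al be).
Proof. by []. Qed.

Lemma gcasE N (phi : phiT N) n m al be : gcas phi n m al be = casg (phi n m al be).
Proof. by []. Qed.

Theorem theorem5p2
  (a1 a2 a3 d p q a b : CC)
  (hpq : p != q) (hpa : p != a) (hpb : p != b)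
  (hqa : q != a) (hqb : q != b) (hab : a != b)
  (N : nat) (hN : (0 < N)%N)
  (phi : phiT N) (K : 'M[CC]_N) :
  let s1 := p - d in let s2 := q - d in let s3 := a - d in let s4 := b - d in
  let e1 := eps1 a3 d in let e2 := eps2 a2 a3 d in let e3 := eps3 a1 a2 a3 d in
  let R := Rpol e1 e2 e3 in
  (forall n m al be l : int,
      s1 *: phi (n - 1) m al be l = phi n m al be l - phi (n - 1) m al be (l + 1)) ->
  (forall n m al be l : int,
      s2 *: phi n (m - 1) al be l = phi n m al be l - phi n (m - 1) al be (l + 1)) ->
  (forall n m al be l : int,
      s3 *: phi n m (al - 1) be l = phi n m al be l - phi n m (al - 1) be (l + 1)) ->
  (forall n m al be l : int,
      s4 *: phi n m al (be - 1) l = phi n m al be l - phi n m al (be - 1) (l + 1)) ->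
  (forall n m al be l : int,
      K *m phi n m al be l =
        phi n m al be (l + 4) - e1 *: phi n m al be (l + 3)
        + e2 *: phi n m al be (l + 2) - e3 *: phi n m al be (l + 1)) ->
  forall n m al be : int,
  (* shifts: tilde = n+1, hat = m+1, check = alpha-1, dot = beta+1 *)
  let f := fun dn dm dal dbe => fcas phi (n + dn) (m + dm) (al + dal) (be + dbe) in
  let g := fun dn dm dal dbe => gcas phi (n + dn) (m + dm) (al + dal) (be + dbe) in
  (   (s1 - s3) * f 1 0 0 0 * f 0 0 (-1) 1 - (s1 - s4) * f 0 0 0 0 * f 1 0 (-1) 1
     + (s3 - s4) * f 0 0 0 1 * f 1 0 (-1) 0 = 0) /\
  (   (s2 - s3) * f 0 1 0 0 * f 0 0 (-1) 1 - (s2 - s4) * f 0 0 0 0 * f 0 1 (-1) 1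
     + (s3 - s4) * f 0 0 0 1 * f 0 1 (-1) 0 = 0) /\
  (   f 0 0 0 0 * (s3 * f 1 0 (-1) 0 + g 1 0 (-1) 0) + (s1 - s3) * f 1 0 0 0 * f 0 0 (-1) 0
     - (s1 * f 0 0 0 0 + g 0 0 0 0) * f 1 0 (-1) 0 = 0) /\
  (   f 0 0 0 0 * (s3 * f 0 1 (-1) 0 + g 0 1 (-1) 0) + (s2 - s3) * f 0 1 0 0 * f 0 0 (-1) 0
     - (s2 * f 0 0 0 0 + g 0 0 0 0) * f 0 1 (-1) 0 = 0) /\
  (   f 1 0 0 0 * (s1 * f 0 0 0 1 + g 0 0 0 1) - (s1 - s4) * f 0 0 0 0 * f 1 0 0 1
     - (s4 * f 1 0 0 0 + g 1 0 0 0) * f 0 0 0 1 = 0) /\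
  (   f 0 1 0 0 * (s2 * f 0 0 0 1 + g 0 0 0 1) - (s2 - s4) * f 0 0 0 0 * f 0 1 0 1
     - (s4 * f 0 1 0 0 + g 0 1 0 0) * f 0 0 0 1 = 0) /\
  (   (s1 - s4) * f 1 0 0 1 * f 0 1 0 0 - (s2 - s4) * f 0 1 0 1 * f 1 0 0 0
     - (s1 - s2) * f 1 1 0 0 * f 0 0 0 1 = 0) /\
  (   (s3 * f 0 0 (-1) 0 + g 0 0 (-1) 0) * f 1 1 0 1
     - f 0 0 (-1) 0 * (g 1 1 0 1 - s4 * f 1 1 0 1)
     - R s1 s4 / ((s1 - s2) * (s1 - s3)) * f 0 1 0 1 * f 1 0 (-1) 0
     + R s2 s4 / ((s1 - s2) * (s2 - s3)) * f 1 0 0 1 * f 0 1 (-1) 0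
     + (s1 + s2 + e1) * f 0 0 (-1) 0 * f 1 1 0 1
     - R s3 s4 / ((s1 - s3) * (s2 - s3)) * f 0 0 0 0 * f 1 1 (-1) 1 = 0).
Proof.
case: N hN phi K => [//|N] _ phi K s1 s2 s3 s4 e1 e2 e3 R cond1 cond2 cond3 cond4 dispK.
move=> n m al be f g.
have shift1 n' m' al' be' : phi (n' + 1) m' al' be' = step s1 (phi n' m' al' be').
  exact: (@condition_step _ _ (fun k => phi k m' al' be') (fun k => cond1 k m' al' be')).
have shift2 n' m' al' be' : phi n' (m' + 1) al' be' = step s2 (phi n' m' al' be').
  exact: (@condition_step _ _ (fun k => phi n' k al' be') (fun k => cond2 n' k al' be')).
have shift3 n' m' al' be' : phi n' m' (al' + 1) be' = step s3 (phi n' m' al' be').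
  exact: (@condition_step _ _ (fun k => phi n' m' k be') (fun k => cond3 n' m' k be')).
have shift4 n' m' al' be' : phi n' m' al' (be' + 1) = step s4 (phi n' m' al' be').
  exact: (@condition_step _ _ (fun k => phi n' m' al' k) (fun k => cond4 n' m' al' k)).
have ne12 : s1 != s2 by apply: contra hpq => /eqP /addIr ->.
have ne13 : s1 != s3 by apply: contra hpa => /eqP /addIr ->.
have ne23 : s2 != s3 by apply: contra hqa => /eqP /addIr ->.
rewrite {}/f {}/g !addr0 !fcasE !gcasE.
have [al' ->] : exists al', al = al' + 1 by exists (al - 1); rewrite subrK.
rewrite addrK.
split; [|split; [|split; [|split; [|split; [|split; [|split]]]]]].
- by rewrite !shift1 !shift3 !shift4 casf_hirota_miwa.
- by rewrite !shift2 !shift3 !shift4 casf_hirota_miwa.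
- by rewrite !shift1 !shift3 casfg_step_identity.
- by rewrite !shift2 !shift3 casfg_step_identity.
- rewrite !shift1 !shift4 -[RHS](casfg_step_identity (phi n m (al' + 1) be) s4 s1).
  by rewrite (step_comm s4 s1); ring.
- rewrite !shift2 !shift4 -[RHS](casfg_step_identity (phi n m (al' + 1) be) s4 s2).
  by rewrite (step_comm s4 s2); ring.
- rewrite !shift1 !shift2 !shift4 -[RHS]oppr0.
  by rewrite -[in RHS](casf_hirota_miwa (phi n m (al' + 1) be) s1 s2 s4); ring.
- rewrite !shift1 !shift2 !shift3 !shift4.
  exact: (casfg_dispersion_identity _ ne12 ne13 ne23 (dispK n m al' be)).
Qed.
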